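(* Let $X_n\subset\mathbb{R}^2$ ($n\in\mathbb{N}$) be closed sets converging in the Painlevé–Kuratowski sense to a nonempty set $X\subset\mathbb{R}^2$. Then the Clarke subdifferentials $\partial\,\mathrm{dist}^2_{X_n}$ tend graphically to $\partial\,\mathrm{dist}^2_X$.
   Context: For a nonempty set $A\subset\mathbb{R}^p$, $\mathrm{dist}_A(a)=\inf\{|x-a|:x\in A\}$ (Euclidean norm) and $\mathrm{dist}^2_A=(\mathrm{dist}_A)^2$, a locally Lipschitz function. For a locally Lipschitz $g\colon\mathbb{R}^p\to\mathbb{R}$ the Clarke subdifferential is $\partial g(x):=\mathrm{conv}\{\lim_{\nu} g'(x_\nu)\mid x_\nu\notin Z,\ x_\nu\to x,\ (g'(x_\nu))_\nu\text{ convergent}\}$, $Z$ being a null set containing the non-differentiability points of $g$. For subsets $A_n$ of a metric space $M$, $\liminf A_n$ is the set of limits of sequences $x_n\in A_n$, $\limsup A_n$ is the set of limits of sequences $x_{n_k}\in A_{n_k}$ along some $n_1<n_2<\dots$, and $A_n\to A$ in the Painlevé–Kuratowski sense if both equal $A$. A sequence of multifunctions $F_n\colon\mathbb{R}^2\rightrightarrows Y$ tends graphically to $F$ if the graphs $\Gamma_{F_n}=\{(x,y):y\in F_n(x)\}$ converge to $\Gamma_F$ in the Painlevé–Kuratowski sense. *)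

From Stdlib Require Import Reals Lra.
From Coquelicot Require Import Coquelicot.
Open Scope R_scope.

Definition pt : Type := (R * R)%type.
Definition padd (p q : pt) : pt := (fst p + fst q, snd p + snd q).
Definition psub (p q : pt) : pt := (fst p - fst q, snd p - snd q).
Definition norm2 (p : pt) : R := sqrt (fst p ^ 2 + snd p ^ 2).
Definition dot (p q : pt) : R := fst p * fst q + snd p * snd q.

Definition cvg_pt (u : nat -> pt) (x : pt) : Prop :=
  forall eps, 0 < eps -> exists N, forall n, (N <= n)%nat -> norm2 (psub (u n) x) < eps.

Definition cvg_pp (u : nat -> pt * pt) (z : pt * pt) : Prop :=
  cvg_pt (fun n => fst (u n)) (fst z) /\ cvg_pt (fun n => snd (u n)) (snd z).

Definition closed_pt (A : pt -> Prop) : Prop :=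
  forall x, ~ A x -> exists eps, 0 < eps /\
    forall y, norm2 (psub y x) < eps -> ~ A y.

Definition liminf_set {M : Type} (cv : (nat -> M) -> M -> Prop)
  (A : nat -> M -> Prop) : M -> Prop :=
  fun x => exists u : nat -> M, (forall n, A n (u n)) /\ cv u x.

Definition limsup_set {M : Type} (cv : (nat -> M) -> M -> Prop)
  (A : nat -> M -> Prop) : M -> Prop :=
  fun x => exists (phi : nat -> nat) (u : nat -> M),
    (forall k, (phi k < phi (S k))%nat) /\
    (forall k, A (phi k) (u k)) /\ cv u x.

Definition PK_conv {M : Type} (cv : (nat -> M) -> M -> Prop)
  (A : nat -> M -> Prop) (B : M -> Prop) : Prop :=
  (forall x, liminf_set cv A x <-> B x) /\ (forall x, limsup_set cv A x <-> B x).

Definition dist_set (A : pt -> Prop) (a : pt) : R :=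
  real (Glb_Rbar (fun r => exists x, A x /\ r = norm2 (psub x a))).
Definition dist2_set (A : pt -> Prop) (a : pt) : R := (dist_set A a) ^ 2.

Definition has_grad (g : pt -> R) (x v : pt) : Prop :=
  forall eps, 0 < eps -> exists delta, 0 < delta /\
    forall h, norm2 h < delta ->
      Rabs (g (padd x h) - g x - dot v h) <= eps * norm2 h.

Definition clarke_gen (g : pt -> R) (x : pt) : pt -> Prop :=
  fun y => exists xs vs : nat -> pt,
    (forall n, has_grad g (xs n) (vs n)) /\ cvg_pt xs x /\ cvg_pt vs y.

Definition conv_hull (S : pt -> Prop) : pt -> Prop :=
  fun y => exists (n : nat) (l : nat -> R) (p : nat -> pt),
    (forall i, (i <= n)%nat -> 0 <= l i /\ S (p i)) /\
    sum_f_R0 l n = 1 /\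
    y = (sum_f_R0 (fun i => l i * fst (p i)) n,
         sum_f_R0 (fun i => l i * snd (p i)) n).

Definition clarke_subdiff (g : pt -> R) (x : pt) : pt -> Prop :=
  conv_hull (clarke_gen g x).

Definition graph (F : pt -> pt -> Prop) : pt * pt -> Prop :=
  fun z => F (fst z) (snd z).

(* [asplund A z = |z|^2 - d_A(z)^2] is the supremum of the affine maps [z |-> 2 <z, a> - |a|^2]
   over [a] in [A], so it is convex and [d_A^2] is a difference of convex functions. Its Clarke
   subdifferential at [x] is [2 x - v] for [v] ranging over the convex subdifferential of
   [asplund A] at [x]: limits of gradients of [d_A^2] give convex subgradients of [asplund A], and
   conversely Danskin's formula, Caratheodory's theorem and separation in the plane show that these
   subgradients are twice the convex combinations of (at most three) nearest points [p] of [x],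
   while each [2 (x - p)] is a limit of gradients along the segment from [p] to [x].
   Painleve-Kuratowski convergence of closed sets gives locally uniform convergence of the distance
   functions, hence of the convex functions [asplund (Xs n)]. The upper limit of the subdifferential
   graphs is then controlled by passing to the limit in the subgradient inequality; for the lower
   limit, a point of the limit graph is approximated through the proximal points of
   [asplund (Xs n)], which converge because the proximal objectives grow quadratically. *)

From Stdlib Require Import Reals Lra Lia Classical ClassicalEpsilon.
From Coquelicot Require Import Coquelicot.
Open Scope R_scope.

(** * Plane geometry *)

Definition sqnorm (p : pt) : R := dot p p.
Definition pscale (a : R) (p : pt) : pt := (a * fst p, a * snd p).
Definition lerp (t : R) (a b : pt) : pt := padd (pscale (1 - t) a) (pscale t b).

Ltac pt_ring := unfold sqnorm, dot, lerp, psub, padd, pscale; simpl; ring.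
Ltac pt_eq := apply injective_projections; pt_ring.

Lemma sqnorm_ge0 p : 0 <= sqnorm p.
Proof. unfold sqnorm, dot; nra. Qed.

Lemma norm2_ge0 p : 0 <= norm2 p.
Proof. apply sqrt_pos. Qed.

Lemma norm2_sqr p : norm2 p * norm2 p = sqnorm p.
Proof. unfold norm2; rewrite sqrt_sqrt; [pt_ring | simpl; nra]. Qed.

Lemma norm2_le_of_sqnorm p r : 0 <= r -> sqnorm p <= r * r -> norm2 p <= r.
Proof. intros. pose proof (norm2_sqr p); pose proof (norm2_ge0 p); nra. Qed.

Lemma sqnorm_le0_eq a b : sqnorm (psub a b) <= 0 -> a = b.
Proof.
  unfold sqnorm, dot, psub; simpl; intros H.
  pose proof (Rle_0_sqr (fst a - fst b)); pose proof (Rle_0_sqr (snd a - snd b)).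
  unfold Rsqr in *; apply injective_projections; nra.
Qed.

Lemma Rabs_fst_le p : Rabs (fst p) <= norm2 p.
Proof.
  pose proof (norm2_sqr p); pose proof (norm2_ge0 p); unfold sqnorm, dot in *.
  apply Rabs_le; nra.
Qed.

Lemma Rabs_snd_le p : Rabs (snd p) <= norm2 p.
Proof.
  pose proof (norm2_sqr p); pose proof (norm2_ge0 p); unfold sqnorm, dot in *.
  apply Rabs_le; nra.
Qed.

Lemma norm2_le_Rabs p : norm2 p <= Rabs (fst p) + Rabs (snd p).
Proof.
  pose proof (Rabs_pos (fst p)); pose proof (Rabs_pos (snd p)).
  apply norm2_le_of_sqnorm; [lra|].
  pose proof (Rsqr_abs (fst p)); pose proof (Rsqr_abs (snd p)).
  unfold sqnorm, dot, Rsqr in *; nra.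
Qed.

Lemma Rabs_dot_le p q : Rabs (dot p q) <= norm2 p * norm2 q.
Proof.
  assert (Hlagrange : dot p q * dot p q + (fst p * snd q - snd p * fst q) ^ 2
                      = sqnorm p * sqnorm q) by pt_ring.
  rewrite <- (norm2_sqr p), <- (norm2_sqr q) in Hlagrange.
  pose proof (pow2_ge_0 (fst p * snd q - snd p * fst q)).
  pose proof (Rmult_le_pos _ _ (norm2_ge0 p) (norm2_ge0 q)).
  apply Rabs_le; split; nra.
Qed.

Lemma dot_le_norm2 p q : dot p q <= norm2 p * norm2 q.
Proof. pose proof (Rabs_dot_le p q); pose proof (Rle_abs (dot p q)); lra. Qed.

Lemma norm2_triangle p q : norm2 (padd p q) <= norm2 p + norm2 q.
Proof.
  pose proof (norm2_ge0 p); pose proof (norm2_ge0 q).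
  apply norm2_le_of_sqnorm; [lra|].
  assert (E : sqnorm (padd p q) = sqnorm p + 2 * dot p q + sqnorm q) by pt_ring.
  rewrite E, <- (norm2_sqr p), <- (norm2_sqr q).
  pose proof (dot_le_norm2 p q); nra.
Qed.

Lemma norm2_psub_triangle a b c : norm2 (psub a c) <= norm2 (psub a b) + norm2 (psub b c).
Proof. replace (psub a c) with (padd (psub a b) (psub b c)) by pt_eq. apply norm2_triangle. Qed.

Lemma norm2_psub_sym a b : norm2 (psub a b) = norm2 (psub b a).
Proof. unfold norm2, psub; simpl; f_equal; ring. Qed.

Lemma norm2_le_psub a b : norm2 a <= norm2 b + norm2 (psub a b).
Proof. replace a with (padd b (psub a b)) at 1 by pt_eq. apply norm2_triangle. Qed.

Lemma norm2_pscale a p : norm2 (pscale a p) = Rabs a * norm2 p.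
Proof.
  apply Rsqr_inj; [apply norm2_ge0 | apply Rmult_le_pos; [apply Rabs_pos | apply norm2_ge0] |].
  unfold Rsqr; rewrite Rmult_assoc, (Rmult_comm (norm2 p)), Rmult_assoc, norm2_sqr,
    <- Rmult_assoc, <- Rabs_mult, Rabs_pos_eq, norm2_sqr by nra.
  pt_ring.
Qed.

Lemma le_of_sqr_le s K : 0 <= s -> s * s <= K -> s <= 1 + K.
Proof. intros. destruct (Rle_dec s 1); nra. Qed.

Lemma completed_square_ge s r c : 0 < c -> - (r * r / c) <= c * (s * s) - 2 * s * r.
Proof.
  intros Hc.
  assert (E : c * (s * s) - 2 * s * r + r * r / c = (c * s - r) * (c * s - r) / c)
    by (field; lra).
  assert (0 <= (c * s - r) * (c * s - r) / c)
    by (apply Rdiv_le_0_compat; [apply Rle_0_sqr | exact Hc]).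
  lra.
Qed.

Lemma le_of_le_add_eps a b : (forall e, 0 < e -> a <= b + e) -> a <= b.
Proof. intros H. apply Rnot_lt_le; intros Hl. specialize (H ((a - b) / 2) ltac:(lra)). lra. Qed.

Lemma exists_small_step K e : 0 <= K -> 0 < e -> exists t, 0 < t <= 1 /\ t * K <= e.
Proof.
  intros HK He. exists (Rmin 1 (e / (K + 1))). split; [split; [|apply Rmin_l]|].
  - apply Rmin_glb_lt; [lra | apply Rdiv_lt_0_compat; lra].
  - pose proof (Rmin_r 1 (e / (K + 1))) as H.
    apply (Rmult_le_compat_r (K + 1)) in H; [|lra].
    unfold Rdiv in H; rewrite Rmult_assoc, Rinv_l in H; nra.
Qed.

(** * Sequences *)

Lemma lim_le (u v : nat -> R) (a b : R) :
  (forall n, u n <= v n) -> is_lim_seq u a -> is_lim_seq v b -> a <= b.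
Proof. intros H Hu Hv. exact (is_lim_seq_le u v a b H Hu Hv). Qed.

Lemma is_lim_seq_inv_succ : is_lim_seq (fun k => / (INR k + 1)) 0.
Proof.
  assert (H : is_lim_seq (fun k => INR (S k)) p_infty)
    by (apply (is_lim_seq_incr_1 INR p_infty), is_lim_seq_INR).
  apply (is_lim_seq_ext (fun k => / INR (S k))); [intros k; now rewrite S_INR|].
  replace (Finite 0) with (Rbar_inv p_infty) by reflexivity.
  apply is_lim_seq_inv; [exact H | discriminate].
Qed.

Lemma inv_succ_pos k : 0 < / (INR k + 1).
Proof. apply Rinv_0_lt_compat; pose proof (pos_INR k); lra. Qed.

Lemma inv_succ_le1 k : / (INR k + 1) <= 1.
Proof. rewrite <- Rinv_1; apply Rinv_le_contravar; [lra|]; pose proof (pos_INR k); lra. Qed.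

Lemma inv_succ_antimono k n : (k <= n)%nat -> / (INR n + 1) <= / (INR k + 1).
Proof.
  intros H; apply Rinv_le_contravar; [pose proof (pos_INR k); lra|].
  apply le_INR in H; lra.
Qed.

Lemma is_lim_seq_squeeze (u e : nat -> R) (l : R) :
  (forall n, Rabs (u n - l) <= e n) -> is_lim_seq e 0 -> is_lim_seq u l.
Proof.
  intros H He. apply is_lim_seq_spec; apply is_lim_seq_spec in He. intros eps.
  destruct (He eps) as [N HN]. exists N; intros n Hn.
  specialize (HN n Hn); specialize (H n). rewrite Rminus_0_r in HN.
  pose proof (Rle_abs (e n)); lra.
Qed.

Definition strict_incr (s : nat -> nat) : Prop := forall k, (s k < s (S k))%nat.

Lemma strict_incr_lt s : strict_incr s -> forall a b, (a < b)%nat -> (s a < s b)%nat.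
Proof. intros H a b Hab. induction Hab; [apply H | specialize (H m); lia]. Qed.

Lemma strict_incr_ge s : strict_incr s -> forall k, (k <= s k)%nat.
Proof. intros H k. induction k; [lia | specialize (H k); lia]. Qed.

Lemma strict_incr_comp s r : strict_incr s -> strict_incr r -> strict_incr (fun k => s (r k)).
Proof. intros Hs Hr k. apply strict_incr_lt; auto. Qed.

Lemma is_lim_seq_subseq_incr (u : nat -> R) (l : R) s :
  strict_incr s -> is_lim_seq u l -> is_lim_seq (fun k => u (s k)) l.
Proof. intros Hs Hu. apply is_lim_seq_subseq; [apply eventually_subseq, Hs | exact Hu]. Qed.

Lemma exists_subseq (Q : nat -> nat -> Prop) :
  (forall k N, exists n, (N <= n)%nat /\ Q k n) ->
  exists s, strict_incr s /\ forall k, Q k (s k).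
Proof.
  intros H.
  destruct (choice (fun kN n => (snd kN <= n)%nat /\ Q (fst kN) n)
                   (fun kN => H (fst kN) (snd kN))) as [f Hf].
  set (s := fix s k := match k with O => f (O, O) | S k' => f (k, S (s k')) end).
  exists s; split.
  - intros k. exact (proj1 (Hf (S k, S (s k)))).
  - intros [|k]; [exact (proj2 (Hf (O, O))) | exact (proj2 (Hf (S k, S (s k))))].
Qed.

Lemma not_eventually_subseq (P : nat -> Prop) :
  ~ (exists N, forall n, (N <= n)%nat -> P n) ->
  exists s, strict_incr s /\ forall k, ~ P (s k).
Proof.
  intros H. apply (exists_subseq (fun _ n => ~ P n)). intros _ N.
  apply NNPP; intros Hn. apply H; exists N; intros n Hn'.
  apply NNPP; intros HP. apply Hn; exists n; auto.
Qed.

Lemma bolzano_weierstrass_R (u : nat -> R) M : (forall n, Rabs (u n) <= M) ->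
  exists s (l : R), strict_incr s /\ is_lim_seq (fun k => u (s k)) l.
Proof.
  intros H.
  destruct (Bolzano_Weierstrass u (fun c => -M <= c <= M) (compact_P3 (-M) M)) as [l Hl].
  { intros n; exact (proj1 (Rabs_le_between _ _) (H n)). }
  destruct (exists_subseq (fun k n => Rabs (u n - l) < / (INR k + 1))) as [s [Hs Hq]].
  { intros k N.
    destruct (Hl (fun y => Rabs (y - l) < / (INR k + 1)) N) as [n Hn]; [|now exists n].
    exists (mkposreal _ (inv_succ_pos k)); intros y Hy; exact Hy. }
  exists s, l; split; auto.
  apply (is_lim_seq_squeeze _ _ l (fun k => Rlt_le _ _ (Hq k)) is_lim_seq_inv_succ).
Qed.

Lemma is_lim_seq_sqr (u : nat -> R) (l : R) :
  is_lim_seq u l -> is_lim_seq (fun n => u n ^ 2) (l ^ 2).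
Proof.
  intros H. apply (is_lim_seq_ext (fun n => u n * u n)); [intros; ring|].
  replace (l ^ 2) with (l * l) by ring. apply is_lim_seq_mult'; exact H.
Qed.

Lemma cvg_pt_iff (u : nat -> pt) (x : pt) :
  cvg_pt u x <-> is_lim_seq (fun n => norm2 (psub (u n) x)) 0.
Proof.
  split; intros H.
  - apply is_lim_seq_spec; intros eps.
    destruct (H eps (cond_pos eps)) as [N HN]. exists N; intros n Hn.
    rewrite Rminus_0_r, Rabs_pos_eq by apply norm2_ge0. auto.
  - apply is_lim_seq_spec in H. intros eps He.
    destruct (H (mkposreal eps He)) as [N HN]. exists N; intros n Hn.
    specialize (HN n Hn). rewrite Rminus_0_r, Rabs_pos_eq in HN by apply norm2_ge0. exact HN.
Qed.

Lemma cvg_pt_fst (u : nat -> pt) (x : pt) : cvg_pt u x -> is_lim_seq (fun n => fst (u n)) (fst x).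
Proof.
  intros H. apply is_lim_seq_spec; intros eps.
  destruct (H eps (cond_pos eps)) as [N HN]. exists N; intros n Hn.
  pose proof (Rabs_fst_le (psub (u n) x)); specialize (HN n Hn); simpl in *; lra.
Qed.

Lemma cvg_pt_snd (u : nat -> pt) (x : pt) : cvg_pt u x -> is_lim_seq (fun n => snd (u n)) (snd x).
Proof.
  intros H. apply is_lim_seq_spec; intros eps.
  destruct (H eps (cond_pos eps)) as [N HN]. exists N; intros n Hn.
  pose proof (Rabs_snd_le (psub (u n) x)); specialize (HN n Hn); simpl in *; lra.
Qed.

Lemma cvg_pt_of_coords (u : nat -> pt) (x : pt) :
  is_lim_seq (fun n => fst (u n)) (fst x) -> is_lim_seq (fun n => snd (u n)) (snd x) ->
  cvg_pt u x.
Proof.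
  intros H1 H2 eps He. apply is_lim_seq_spec in H1, H2.
  destruct (H1 (mkposreal (eps / 2) ltac:(lra))) as [N1 HN1].
  destruct (H2 (mkposreal (eps / 2) ltac:(lra))) as [N2 HN2]. simpl in *.
  exists (N1 + N2)%nat; intros n Hn.
  specialize (HN1 n ltac:(lia)); specialize (HN2 n ltac:(lia)).
  pose proof (norm2_le_Rabs (psub (u n) x)); simpl in *; lra.
Qed.

Ltac cvg_coords := apply cvg_pt_of_coords; simpl;
  repeat match goal with H : cvg_pt _ _ |- _ =>
    pose proof (cvg_pt_fst _ _ H); pose proof (cvg_pt_snd _ _ H); clear H end.

Lemma cvg_pt_const (x : pt) : cvg_pt (fun _ => x) x.
Proof. cvg_coords; apply is_lim_seq_const. Qed.

Lemma cvg_pt_padd (u v : nat -> pt) (x y : pt) :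
  cvg_pt u x -> cvg_pt v y -> cvg_pt (fun n => padd (u n) (v n)) (padd x y).
Proof. intros; cvg_coords; apply is_lim_seq_plus'; auto. Qed.

Lemma cvg_pt_psub (u v : nat -> pt) (x y : pt) :
  cvg_pt u x -> cvg_pt v y -> cvg_pt (fun n => psub (u n) (v n)) (psub x y).
Proof. intros; cvg_coords; apply is_lim_seq_minus'; auto. Qed.

Lemma cvg_pt_pscale (a : nat -> R) (u : nat -> pt) (a0 : R) (x : pt) :
  is_lim_seq a a0 -> cvg_pt u x -> cvg_pt (fun n => pscale (a n) (u n)) (pscale a0 x).
Proof. intros; cvg_coords; apply is_lim_seq_mult'; auto. Qed.

Lemma is_lim_seq_dot (u v : nat -> pt) (x y : pt) :
  cvg_pt u x -> cvg_pt v y -> is_lim_seq (fun n => dot (u n) (v n)) (dot x y).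
Proof.
  intros Hu Hv. unfold dot.
  apply is_lim_seq_plus'; apply is_lim_seq_mult';
    auto using cvg_pt_fst, cvg_pt_snd.
Qed.

Lemma is_lim_seq_sqnorm (u : nat -> pt) (x : pt) :
  cvg_pt u x -> is_lim_seq (fun n => sqnorm (u n)) (sqnorm x).
Proof. intros; apply is_lim_seq_dot; auto. Qed.

Lemma is_lim_seq_norm2_psub (u : nat -> pt) (x c : pt) :
  cvg_pt u x -> is_lim_seq (fun n => norm2 (psub (u n) c)) (norm2 (psub x c)).
Proof.
  intros H. apply cvg_pt_iff in H.
  apply (is_lim_seq_squeeze _ (fun n => norm2 (psub (u n) x))); [intros n | exact H].
  pose proof (norm2_psub_triangle (u n) x c) as H1.
  pose proof (norm2_psub_triangle x (u n) c) as H2. rewrite (norm2_psub_sym x (u n)) in H2.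
  apply Rabs_le; lra.
Qed.

Lemma cvg_pt_subseq (u : nat -> pt) (x : pt) s :
  strict_incr s -> cvg_pt u x -> cvg_pt (fun k => u (s k)) x.
Proof.
  intros Hs H eps He. destruct (H eps He) as [N HN]. exists N; intros n Hn.
  apply HN. pose proof (strict_incr_ge s Hs n). lia.
Qed.

Lemma cvg_pt_ext (u v : nat -> pt) (x : pt) : (forall n, u n = v n) -> cvg_pt u x -> cvg_pt v x.
Proof. intros E H eps He. destruct (H eps He) as [N HN]. exists N; intros; rewrite <- E; auto. Qed.

Lemma bolzano_weierstrass_pt (u : nat -> pt) M : (forall n, norm2 (u n) <= M) ->
  exists s c, strict_incr s /\ cvg_pt (fun k => u (s k)) c.
Proof.
  intros H.
  destruct (bolzano_weierstrass_R (fun n => fst (u n)) M) as [s1 [l1 [H1 L1]]].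
  { intros n; eapply Rle_trans; [apply Rabs_fst_le | apply H]. }
  destruct (bolzano_weierstrass_R (fun k => snd (u (s1 k))) M) as [s2 [l2 [H2 L2]]].
  { intros n; eapply Rle_trans; [apply Rabs_snd_le | apply H]. }
  exists (fun k => s1 (s2 k)), (l1, l2); split; [apply strict_incr_comp; auto|].
  apply cvg_pt_of_coords; simpl; auto.
  apply (is_lim_seq_subseq_incr (fun k => fst (u (s1 k)))); auto.
Qed.

Lemma cvg_pt_eventually_bounded (u : nat -> pt) (x : pt) :
  cvg_pt u x -> exists N, forall n, (N <= n)%nat -> norm2 (u n) <= norm2 x + 1.
Proof.
  intros H. destruct (H 1 Rlt_0_1) as [N HN]. exists N; intros n Hn.
  pose proof (norm2_le_psub (u n) x); specialize (HN n Hn); lra.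
Qed.

Lemma cvg_pt_of_unique_cluster (u : nat -> pt) (x : pt) N M :
  (forall n, (N <= n)%nat -> norm2 (u n) <= M) ->
  (forall s c, strict_incr s -> cvg_pt (fun k => u (s k)) c -> c = x) ->
  cvg_pt u x.
Proof.
  intros Hb Hc eps He. apply NNPP; intros Hn.
  destruct (not_eventually_subseq (fun n => (N <= n)%nat -> norm2 (psub (u n) x) < eps))
    as [s [Hs Hfar]].
  { intros [N' HN']. apply Hn. exists (N + N')%nat. intros n Hn'. apply HN'; lia. }
  assert (Hfar' : forall k, (N <= s k)%nat /\ eps <= norm2 (psub (u (s k)) x)).
  { intros k. specialize (Hfar k).
    destruct (Nat.le_gt_cases N (s k)) as [HN|HN]; [|exfalso; apply Hfar; lia].
    split; [exact HN|]. apply Rnot_lt_le; auto. }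
  destruct (bolzano_weierstrass_pt (fun k => u (s k)) M) as [r [c [Hr Hcv]]].
  { intros k; apply Hb, Hfar'. }
  specialize (Hc _ c (strict_incr_comp _ _ Hs Hr) Hcv); subst c.
  destruct (Hcv eps He) as [K HK]. specialize (HK K (le_n K)).
  pose proof (proj2 (Hfar' (r K))). lra.
Qed.

(** * Compactness and minimizers *)

Definition seqclosed (S : pt -> Prop) : Prop :=
  forall (u : nat -> pt) c, (forall n, S (u n)) -> cvg_pt u c -> S c.

Definition seqcompact (S : pt -> Prop) : Prop :=
  forall u : nat -> pt, (forall n, S (u n)) ->
  exists s c, strict_incr s /\ S c /\ cvg_pt (fun k => u (s k)) c.

Definition seq_continuous (f : pt -> R) : Prop :=
  forall (u : nat -> pt) c, cvg_pt u c -> is_lim_seq (fun n => f (u n)) (f c).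

Lemma seqclosed_of_closed A : closed_pt A -> seqclosed A.
Proof.
  intros H u c Hu Hc. apply NNPP; intros Hn. destruct (H c Hn) as [eps [He Hb]].
  destruct (Hc eps He) as [N HN]. exact (Hb (u N) (HN N (le_n N)) (Hu N)).
Qed.

Lemma seqcompact_of_closed_bounded S M :
  seqclosed S -> (forall z, S z -> norm2 z <= M) -> seqcompact S.
Proof.
  intros Hcl Hb u Hu.
  destruct (bolzano_weierstrass_pt u M) as [s [c [Hs Hc]]]; [intros n; apply Hb, Hu|].
  exists s, c; repeat split; auto. exact (Hcl _ c (fun k => Hu (s k)) Hc).
Qed.

Lemma seqclosed_sublevel f C : seq_continuous f -> seqclosed (fun z => f z <= C).
Proof.
  intros Hf u c Hu Hc.
  apply (lim_le (fun n => f (u n)) (fun _ => C)); auto using is_lim_seq_const.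
Qed.

Lemma exists_minimizer (S : pt -> Prop) (f : pt -> R) L z0 :
  S z0 -> (forall z, S z -> L <= f z) -> seqcompact S -> seq_continuous f ->
  exists c, S c /\ forall z, S z -> f c <= f z.
Proof.
  intros Hz0 HL Hcpt Hf.
  set (E := fun r => exists z, S z /\ r = f z).
  destruct (Glb_Rbar_correct E) as [Hlb Hglb].
  assert (Lm : Rbar_le L (Glb_Rbar E)) by (apply Hglb; intros r [z [Hz ->]]; apply HL, Hz).
  assert (Um : Rbar_le (Glb_Rbar E) (f z0)) by (apply Hlb; exists z0; auto).
  destruct (Glb_Rbar E) as [m| |]; simpl in Lm, Um; try contradiction.
  assert (Hm : forall z, S z -> m <= f z)
    by (intros z Hz; exact (Hlb (f z) (ex_intro _ z (conj Hz eq_refl)))).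
  assert (Happrox : forall k : nat, exists z, S z /\ f z < m + / (INR k + 1)).
  { intros k. apply NNPP; intros Hn.
    assert (Hle : Rbar_le (m + / (INR k + 1)) m).
    { apply Hglb. intros r [z [Hz ->]]. simpl. apply Rnot_lt_le; intros Hl. apply Hn; eauto. }
    simpl in Hle. pose proof (inv_succ_pos k). lra. }
  destruct (choice _ Happrox) as [u Hu].
  destruct (Hcpt u (fun n => proj1 (Hu n))) as [s [c [Hs [Sc Hcv]]]].
  exists c; split; auto. intros z Hz.
  enough (f c <= m) by (specialize (Hm z Hz); lra).
  apply (lim_le (fun k => f (u (s k))) (fun k => m + / (INR k + 1))); [|apply Hf, Hcv|].
  - intros k. pose proof (inv_succ_antimono k (s k) (strict_incr_ge s Hs k)).
    pose proof (proj2 (Hu (s k))). lra.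
  - replace (Finite m) with (Rbar_plus m 0) by (simpl; f_equal; ring).
    apply is_lim_seq_plus'; [apply is_lim_seq_const | apply is_lim_seq_inv_succ].
Qed.

(** * Distance to a set *)

Section Distance.

Variables (A : pt -> Prop) (a0 : pt).
Hypothesis A_a0 : A a0.

Lemma dist_set_spec z :
  (forall x, A x -> dist_set A z <= norm2 (psub x z)) /\
  (forall m, (forall x, A x -> m <= norm2 (psub x z)) -> m <= dist_set A z).
Proof.
  unfold dist_set.
  set (E := fun r => exists x, A x /\ r = norm2 (psub x z)).
  destruct (Glb_Rbar_correct E) as [Hlb Hglb].
  assert (L0 : Rbar_le 0 (Glb_Rbar E)) by (apply Hglb; intros r [x [_ ->]]; apply norm2_ge0).
  assert (L1 : Rbar_le (Glb_Rbar E) (norm2 (psub a0 z))) by (apply Hlb; exists a0; auto).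
  destruct (Glb_Rbar E) as [g| |]; simpl in L0, L1; try contradiction. simpl. split.
  - intros x Hx. exact (Hlb _ (ex_intro _ x (conj Hx eq_refl))).
  - intros m Hm. assert (H : Rbar_le m g) by (apply Hglb; intros r [x [Hx ->]]; apply Hm, Hx).
    exact H.
Qed.

Lemma dist_set_le z x : A x -> dist_set A z <= norm2 (psub x z).
Proof. apply (proj1 (dist_set_spec z)). Qed.

Lemma dist_set_ge z m : (forall x, A x -> m <= norm2 (psub x z)) -> m <= dist_set A z.
Proof. apply (proj2 (dist_set_spec z)). Qed.

Lemma dist_set_ge0 z : 0 <= dist_set A z.
Proof. apply dist_set_ge; intros; apply norm2_ge0. Qed.

Lemma dist_set_approx z eps : 0 < eps -> exists x, A x /\ norm2 (psub x z) < dist_set A z + eps.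
Proof.
  intros He. apply NNPP; intros Hn.
  enough (dist_set A z + eps <= dist_set A z) by lra.
  apply dist_set_ge; intros x Hx. apply Rnot_lt_le; intros Hl. apply Hn; eauto.
Qed.

Lemma dist_set_le_psub z w : dist_set A z <= dist_set A w + norm2 (psub z w).
Proof.
  enough (dist_set A z - norm2 (psub z w) <= dist_set A w) by lra.
  apply dist_set_ge; intros x Hx. pose proof (dist_set_le z x Hx).
  pose proof (norm2_psub_triangle x w z). rewrite (norm2_psub_sym w z) in *. lra.
Qed.

Lemma dist_set_lipschitz z w : Rabs (dist_set A z - dist_set A w) <= norm2 (psub z w).
Proof.
  pose proof (dist_set_le_psub z w); pose proof (dist_set_le_psub w z) as Hwz.
  rewrite (norm2_psub_sym w z) in Hwz. apply Rabs_le; lra.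
Qed.

Lemma dist2_set_sqr z : dist2_set A z = dist_set A z * dist_set A z.
Proof. unfold dist2_set; ring. Qed.

Lemma dist2_set_ge0 z : 0 <= dist2_set A z.
Proof. rewrite dist2_set_sqr; pose proof (dist_set_ge0 z); nra. Qed.

Lemma dist2_set_le z x : A x -> dist2_set A z <= sqnorm (psub x z).
Proof.
  intros Hx. rewrite dist2_set_sqr, <- norm2_sqr.
  pose proof (dist_set_le z x Hx); pose proof (dist_set_ge0 z); nra.
Qed.

Lemma dist2_set_ge z K : (forall x, A x -> K <= sqnorm (psub x z)) -> K <= dist2_set A z.
Proof.
  intros HK. destruct (Rle_dec K 0); [pose proof (dist2_set_ge0 z); lra|].
  assert (Hs : sqrt K <= dist_set A z).
  { apply dist_set_ge; intros x Hx. specialize (HK x Hx). rewrite <- norm2_sqr in HK.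
    pose proof (sqrt_sqrt K ltac:(lra)); pose proof (sqrt_pos K); pose proof (norm2_ge0 (psub x z)).
    apply Rnot_lt_le; intros Hlt; nra. }
  rewrite dist2_set_sqr. pose proof (sqrt_sqrt K ltac:(lra)); pose proof (sqrt_pos K); nra.
Qed.

Lemma dist2_set_approx z eta : 0 < eta -> exists x, A x /\ sqnorm (psub x z) < dist2_set A z + eta.
Proof.
  intros He. pose proof (dist_set_ge0 z) as Hd. rewrite dist2_set_sqr.
  destruct (exists_small_step (2 * dist_set A z + 1) eta ltac:(lra) He) as [eps [Heps Heps2]].
  destruct (dist_set_approx z eps (proj1 Heps)) as [x [Hx Hl]]. exists x; split; auto.
  rewrite <- norm2_sqr. pose proof (norm2_ge0 (psub x z)); nra.
Qed.

Lemma dist_set_seq_continuous : seq_continuous (dist_set A).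
Proof.
  intros u c Hc. apply cvg_pt_iff in Hc.
  exact (is_lim_seq_squeeze _ _ _ (fun n => dist_set_lipschitz (u n) c) Hc).
Qed.

End Distance.

(** * Convex functions and subgradients *)

Definition convex_fun (f : pt -> R) : Prop :=
  forall a b t, 0 <= t <= 1 -> f (lerp t a b) <= (1 - t) * f a + t * f b.

Definition subgrad (f : pt -> R) (x v : pt) : Prop :=
  forall z, f x + dot v (psub z x) <= f z.

Definition prox_obj (f : pt -> R) (w z : pt) : R := f z + sqnorm (psub z w) / 2.

Lemma subgrad_of_has_grad f z g : convex_fun f -> has_grad f z g -> subgrad f z g.
Proof.
  intros Hf Hg z'. set (d := psub z' z). pose proof (norm2_ge0 d) as Hd.
  apply le_of_le_add_eps; intros e He.
  destruct (exists_small_step (norm2 d) e Hd He) as [eps [[Heps _] Heps_d]].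
  destruct (Hg eps Heps) as [delta [Hdelta Hdiff]].
  destruct (exists_small_step (norm2 d) (delta / 2) Hd ltac:(lra)) as [t [Ht Htd]].
  assert (Hh : norm2 (pscale t d) = t * norm2 d) by (rewrite norm2_pscale, Rabs_pos_eq; lra).
  specialize (Hdiff (pscale t d) ltac:(lra)).
  replace (padd z (pscale t d)) with (lerp t z z') in Hdiff by (unfold d; pt_eq).
  pose proof (Hf z z' t ltac:(lra)) as Hconv.
  assert (Hdot : dot g (pscale t d) = t * dot g d) by pt_ring.
  apply Rabs_le_between in Hdiff. rewrite Hh, Hdot in Hdiff.
  apply (Rmult_le_reg_l t); [lra|]. nra.
Qed.

Lemma subgrad_closed f (xs vs : nat -> pt) x v : seq_continuous f ->
  cvg_pt xs x -> cvg_pt vs v -> (forall n, subgrad f (xs n) (vs n)) -> subgrad f x v.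
Proof.
  intros Hf Hx Hv H z.
  apply (lim_le (fun n => f (xs n) + dot (vs n) (psub z (xs n))) (fun _ => f z));
    [intros n; apply H | | apply is_lim_seq_const].
  apply is_lim_seq_plus'; [apply Hf, Hx|].
  apply is_lim_seq_dot; [exact Hv | apply cvg_pt_psub; [apply cvg_pt_const | exact Hx]].
Qed.

Lemma sum_affine (l : nat -> R) (p : nat -> pt) a b c n :
  sum_f_R0 (fun i => l i * (a + b * fst (p i) + c * snd (p i))) n =
  a * sum_f_R0 l n + b * sum_f_R0 (fun i => l i * fst (p i)) n
    + c * sum_f_R0 (fun i => l i * snd (p i)) n.
Proof. induction n; simpl; [|rewrite IHn]; ring. Qed.

Lemma subgrad_conv_hull f x w G y :
  (forall g, G g -> subgrad f x (psub w g)) -> conv_hull G y -> subgrad f x (psub w y).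
Proof.
  intros HG [n [l [p [Hlp [Hsum ->]]]]] z.
  assert (Hterm : forall i, (i <= n)%nat ->
            l i * (f x + dot (psub w (p i)) (psub z x)) <= l i * f z).
  { intros i Hi. destruct (Hlp i Hi) as [Hl Hp]. apply Rmult_le_compat_l; auto. apply HG, Hp. }
  apply sum_Rle in Hterm.
  assert (Er : sum_f_R0 (fun i => l i * f z) n = f z * sum_f_R0 l n).
  { rewrite scal_sum. apply sum_eq; intros; ring. }
  assert (El : sum_f_R0 (fun i => l i * (f x + dot (psub w (p i)) (psub z x))) n =
    sum_f_R0 (fun i => l i * ((f x + dot w (psub z x)) + (- (fst z - fst x)) * fst (p i)
                              + (- (snd z - snd x)) * snd (p i))) n)
    by (apply sum_eq; intros; pt_ring).
  rewrite Er, El, sum_affine, Hsum in Hterm. unfold dot, psub in *; simpl in *. lra.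
Qed.

Lemma subgrad_of_prox_min f w m : convex_fun f ->
  (forall z, prox_obj f w m <= prox_obj f w z) -> subgrad f m (psub w m).
Proof.
  intros Hf Hm z. set (d := psub z m). pose proof (sqnorm_ge0 d) as Hd.
  apply le_of_le_add_eps; intros e He.
  destruct (exists_small_step (sqnorm d) e Hd He) as [t [Ht Hte]].
  specialize (Hm (lerp t m z)). pose proof (Hf m z t ltac:(lra)). unfold prox_obj in Hm.
  assert (E : sqnorm (psub (lerp t m z) w)
              = sqnorm (psub m w) - 2 * t * dot (psub w m) d + t * t * sqnorm d)
    by (unfold d; pt_ring).
  rewrite E in Hm. apply (Rmult_le_reg_l t); [lra|]. nra.
Qed.

Lemma prox_obj_growth f w m z :
  subgrad f m (psub w m) -> prox_obj f w m + sqnorm (psub z m) / 2 <= prox_obj f w z.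
Proof.
  intros Hm. specialize (Hm z). unfold prox_obj.
  assert (E : sqnorm (psub z w) = sqnorm (psub m w) - 2 * dot (psub w m) (psub z m)
                                  + sqnorm (psub z m)) by pt_ring.
  lra.
Qed.

Lemma prox_obj_seq_continuous f w : seq_continuous f -> seq_continuous (prox_obj f w).
Proof.
  intros Hf u c Hc. unfold prox_obj. apply is_lim_seq_plus'; [apply Hf, Hc|].
  apply is_lim_seq_div'; [|apply is_lim_seq_const|lra].
  apply is_lim_seq_sqnorm, cvg_pt_psub; [exact Hc | apply cvg_pt_const].
Qed.

(** * Caratheodory's theorem and separation in the plane *)

Definition psum (m : nat -> R) (q : nat -> pt) (n : nat) : pt :=
  (sum_f_R0 (fun i => m i * fst (q i)) n, sum_f_R0 (fun i => m i * snd (q i)) n).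

Definition comb3 (l1 l2 : R) (p1 p2 p3 : pt) : pt :=
  padd (padd (pscale l1 p1) (pscale l2 p2)) (pscale (1 - l1 - l2) p3).

Definition conv3 (P : pt -> Prop) (c : pt) : Prop :=
  exists l1 l2 p1 p2 p3, 0 <= l1 /\ 0 <= l2 /\ l1 + l2 <= 1 /\
    P p1 /\ P p2 /\ P p3 /\ c = comb3 l1 l2 p1 p2 p3.

Definition det (a b : pt) : R := fst a * snd b - snd a * fst b.

Lemma affine_dependence4_neq0 (q : nat -> pt) : exists mu : nat -> R,
  sum_f_R0 mu 3 = 0 /\ psum mu q 3 = (0, 0) /\ exists j, (j <= 3)%nat /\ mu j <> 0.
Proof.
  set (u := psub (q 0%nat) (q 3%nat)); set (v := psub (q 1%nat) (q 3%nat));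
    set (w := psub (q 2%nat) (q 3%nat)).
  set (mk := fun a b c : R => fun i => match i with
             | O => a | 1%nat => b | 2%nat => c | _ => - (a + b + c) end).
  (* In the plane, [det v w * u - det u w * v + det u v * w = 0]. *)
  assert (Hcramer : psum (mk (det v w) (- det u w) (det u v)) q 3 = (0, 0))
    by (unfold psum, mk, u, v, w, det, psub; simpl; f_equal; ring).
  destruct (Req_dec (det v w) 0) as [Evw|Evw];
    [destruct (Req_dec (det u w) 0) as [Euw|Euw];
      [destruct (Req_dec (det u v) 0) as [Euv|Euv]|]|].
  - destruct (Req_dec (sqnorm u) 0) as [Eu|Eu].
    + assert (fst u = 0 /\ snd u = 0) as [U1 U2] by (unfold sqnorm, dot in Eu; split; nra).
      exists (mk 1 0 0). unfold psum, mk, u, psub in *; simpl in *.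
      split; [ring | split; [f_equal; lra | exists O; split; [lia | lra]]].
    + exists (mk (dot u v) (- sqnorm u) 0). split; [unfold mk; simpl; ring|split].
      * apply injective_projections; simpl.
        -- transitivity (snd u * det u v); [|rewrite Euv; ring].
           unfold psum, mk, det, u, v, sqnorm, dot, psub; simpl; ring.
        -- transitivity (- fst u * det u v); [|rewrite Euv; ring].
           unfold psum, mk, det, u, v, sqnorm, dot, psub; simpl; ring.
      * exists 1%nat; split; [lia|]. pose proof (sqnorm_ge0 u). unfold mk; lra.
  - exists (mk (det v w) (- det u w) (det u v)).
    split; [unfold mk; simpl; ring | split; [exact Hcramer | exists 2%nat; split; [lia | auto]]].
  - exists (mk (det v w) (- det u w) (det u v)).
    split; [unfold mk; simpl; ring | split; [exact Hcramer | exists 1%nat; split; [lia|]]].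
    unfold mk; lra.
  - exists (mk (det v w) (- det u w) (det u v)).
    split; [unfold mk; simpl; ring | split; [exact Hcramer | exists O; split; [lia | auto]]].
Qed.

Lemma affine_dependence4 (q : nat -> pt) : exists mu : nat -> R,
  sum_f_R0 mu 3 = 0 /\ psum mu q 3 = (0, 0) /\ exists j, (j <= 3)%nat /\ 0 < mu j.
Proof.
  destruct (affine_dependence4_neq0 q) as [mu [Hs [Hq [j [Hj Hmu]]]]].
  destruct (Rlt_dec 0 (mu j)); [exists mu; eauto|].
  exists (fun i => - mu i). unfold psum in *; simpl in *. injection Hq; intros.
  repeat split; [lra | f_equal; lra | exists j; split; [exact Hj | lra]].
Qed.

Lemma exists_argmin (f : nat -> R) (P : nat -> Prop) n :
  (exists i, (i <= n)%nat /\ P i) ->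
  exists k, (k <= n)%nat /\ P k /\ forall j, (j <= n)%nat -> P j -> f k <= f j.
Proof.
  induction n as [|n IH]; intros [i [Hi Pi]].
  - exists O. assert (i = O) by lia; subst.
    repeat split; auto. intros j Hj _. replace j with O by lia. lra.
  - destruct (classic (exists i, (i <= n)%nat /\ P i)) as [Hex|Hnex].
    + destruct (IH Hex) as [k [Hk [Pk Hmin]]].
      destruct (classic (P (S n) /\ f (S n) < f k)) as [[PS Hlt]|Hno].
      * exists (S n); repeat split; auto. intros j Hj Pj.
        destruct (Nat.eq_dec j (S n)); [subst; lra|].
        specialize (Hmin j ltac:(lia) Pj); lra.
      * exists k; repeat split; auto. intros j Hj Pj.
        destruct (Nat.eq_dec j (S n)); [subst; apply Rnot_lt_le; auto | apply Hmin; auto; lia].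
    + exists (S n). assert (Hin : i = S n)
        by (destruct (Nat.eq_dec i (S n)); auto; exfalso; apply Hnex; exists i; split; auto; lia).
      subst. repeat split; auto. intros j Hj Pj.
      destruct (Nat.eq_dec j (S n)); [subst; lra|].
      exfalso; apply Hnex; exists j; split; auto; lia.
Qed.

Lemma caratheodory_step (m : nat -> R) (q : nat -> pt) :
  (forall i, (i <= 3)%nat -> 0 <= m i) -> sum_f_R0 m 3 = 1 ->
  exists m' k, (k <= 3)%nat /\ m' k = 0 /\ (forall i, (i <= 3)%nat -> 0 <= m' i) /\
    sum_f_R0 m' 3 = 1 /\ psum m' q 3 = psum m q 3.
Proof.
  intros Hm Hsum.
  destruct (affine_dependence4 q) as [mu [Hmu0 [Hmuq Hpos]]].
  assert (Hx := f_equal fst Hmuq); assert (Hy := f_equal snd Hmuq); cbn [fst snd psum] in Hx, Hy.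
  destruct (exists_argmin (fun i => m i / mu i) (fun i => 0 < mu i) 3 Hpos)
    as [k [Hk [Hmuk Hmin]]].
  (* Move along the affine dependence until the first weight vanishes. *)
  set (theta := m k / mu k).
  assert (Htheta : 0 <= theta)
    by (apply Rmult_le_pos; [apply Hm, Hk | left; apply Rinv_0_lt_compat, Hmuk]).
  exists (fun i => m i - theta * mu i), k. split; [exact Hk|]. split; [unfold theta; field; lra|].
  split; [|split].
  - intros i Hi. destruct (Rlt_dec 0 (mu i)) as [Hmui|Hmui].
    + specialize (Hmin i Hi Hmui). fold theta in Hmin.
      apply (Rmult_le_compat_r (mu i)) in Hmin; [|lra].
      unfold Rdiv in Hmin; rewrite Rmult_assoc, Rinv_l in Hmin; lra.
    + pose proof (Hm i Hi); nra.
  - transitivity (sum_f_R0 m 3 - theta * sum_f_R0 mu 3); [simpl; ring|].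
    rewrite Hsum, Hmu0; ring.
  - unfold psum; f_equal.
    + transitivity (sum_f_R0 (fun i => m i * fst (q i)) 3
                    - theta * sum_f_R0 (fun i => mu i * fst (q i)) 3);
      [simpl; ring | rewrite Hx; ring].
    + transitivity (sum_f_R0 (fun i => m i * snd (q i)) 3
                    - theta * sum_f_R0 (fun i => mu i * snd (q i)) 3);
      [simpl; ring | rewrite Hy; ring].
Qed.

Lemma caratheodory_conv3 (P : pt -> Prop) (m : nat -> R) (q : nat -> pt) :
  (forall i, (i <= 3)%nat -> 0 <= m i /\ P (q i)) -> sum_f_R0 m 3 = 1 -> conv3 P (psum m q 3).
Proof.
  intros Hq Hsum.
  destruct (caratheodory_step m q) as [m' [k [Hk [Hk0 [Hm' [Hsum' <-]]]]]];
    [intros i Hi; apply Hq, Hi | exact Hsum|].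
  simpl in Hsum'.
  pose proof (Hm' 0%nat ltac:(lia)); pose proof (Hm' 1%nat ltac:(lia));
    pose proof (Hm' 2%nat ltac:(lia)); pose proof (Hm' 3%nat ltac:(lia)).
  pose proof (proj2 (Hq 0%nat ltac:(lia))); pose proof (proj2 (Hq 1%nat ltac:(lia)));
    pose proof (proj2 (Hq 2%nat ltac:(lia))); pose proof (proj2 (Hq 3%nat ltac:(lia))).
  unfold conv3, psum, comb3; simpl.
  assert (Hk4 : (k = 0 \/ k = 1 \/ k = 2 \/ k = 3)%nat) by lia.
  destruct Hk4 as [-> | [-> | [-> | ->]]].
  - exists (m' 1%nat), (m' 2%nat), (q 1%nat), (q 2%nat), (q 3%nat).
    repeat split; auto; try lra.
    replace (1 - m' 1%nat - m' 2%nat) with (m' 3%nat) by lra. rewrite Hk0; pt_eq.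
  - exists (m' 0%nat), (m' 2%nat), (q 0%nat), (q 2%nat), (q 3%nat).
    repeat split; auto; try lra.
    replace (1 - m' 0%nat - m' 2%nat) with (m' 3%nat) by lra. rewrite Hk0; pt_eq.
  - exists (m' 0%nat), (m' 1%nat), (q 0%nat), (q 1%nat), (q 3%nat).
    repeat split; auto; try lra.
    replace (1 - m' 0%nat - m' 1%nat) with (m' 3%nat) by lra. rewrite Hk0; pt_eq.
  - exists (m' 0%nat), (m' 1%nat), (q 0%nat), (q 1%nat), (q 2%nat).
    repeat split; auto; try lra.
    replace (1 - m' 0%nat - m' 1%nat) with (m' 2%nat) by lra. rewrite Hk0; pt_eq.
Qed.

Lemma conv3_lerp (P : pt -> Prop) c p t :
  conv3 P c -> P p -> 0 <= t <= 1 -> conv3 P (lerp t c p).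
Proof.
  intros [l1 [l2 [p1 [p2 [p3 [H1 [H2 [H3 [P1 [P2 [P3 ->]]]]]]]]]]] Hp Ht.
  set (m := fun i => match i with
            | O => (1 - t) * l1 | 1%nat => (1 - t) * l2 | 2%nat => (1 - t) * (1 - l1 - l2)
            | _ => t end).
  set (q := fun i => match i with O => p1 | 1%nat => p2 | 2%nat => p3 | _ => p end).
  replace (lerp t (comb3 l1 l2 p1 p2 p3) p) with (psum m q 3)
    by (unfold psum, m, q, comb3; simpl; pt_eq).
  apply caratheodory_conv3; [|unfold m; simpl; ring].
  intros i Hi. assert (Hi4 : (i = 0 \/ i = 1 \/ i = 2 \/ i = 3)%nat) by lia.
  destruct Hi4 as [-> | [-> | [-> | ->]]]; unfold m, q; split; auto; nra.
Qed.

Lemma seqcompact_triangle :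
  seqcompact (fun l : pt => 0 <= fst l /\ 0 <= snd l /\ fst l + snd l <= 1).
Proof.
  apply (seqcompact_of_closed_bounded _ 2).
  - intros u c Hu Hc. pose proof (cvg_pt_fst _ _ Hc); pose proof (cvg_pt_snd _ _ Hc).
    repeat split.
    + apply (lim_le (fun _ => 0) (fun n => fst (u n))); auto using is_lim_seq_const.
      intros n; apply Hu.
    + apply (lim_le (fun _ => 0) (fun n => snd (u n))); auto using is_lim_seq_const.
      intros n; apply Hu.
    + apply (lim_le (fun n => fst (u n) + snd (u n)) (fun _ => 1)); auto using is_lim_seq_const.
      * intros n; apply Hu.
      * apply is_lim_seq_plus'; auto.
  - intros l Hl. eapply Rle_trans; [apply norm2_le_Rabs|].
    rewrite !Rabs_pos_eq; lra.
Qed.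

Lemma seqcompact_conv3 P : seqcompact P -> seqcompact (conv3 P).
Proof.
  intros HP u Hu.
  destruct (choice _ Hu) as [l1 Hw]; destruct (choice _ Hw) as [l2 Hw'];
    destruct (choice _ Hw') as [q1 Hw'']; destruct (choice _ Hw'') as [q2 Hw'''];
    destruct (choice _ Hw''') as [q3 H]; clear Hw Hw' Hw'' Hw'''.
  destruct (seqcompact_triangle (fun n => (l1 n, l2 n))) as [s1 [L [Hs1 [HL CL]]]].
  { intros n; simpl; destruct (H n) as [? [? [? _]]]; auto. }
  destruct (HP (fun k => q1 (s1 k))) as [s2 [c1 [Hs2 [Pc1 C1]]]]; [intros; apply H|].
  destruct (HP (fun k => q2 (s1 (s2 k)))) as [s3 [c2 [Hs3 [Pc2 C2]]]]; [intros; apply H|].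
  destruct (HP (fun k => q3 (s1 (s2 (s3 k))))) as [s4 [c3 [Hs4 [Pc3 C3]]]]; [intros; apply H|].
  apply (cvg_pt_subseq _ _ (fun k => s2 (s3 (s4 k)))) in CL;
    [|apply strict_incr_comp; [|apply strict_incr_comp]; auto].
  apply (cvg_pt_subseq _ _ (fun k => s3 (s4 k))) in C1; [|apply strict_incr_comp; auto].
  apply (cvg_pt_subseq _ _ s4) in C2; [|auto].
  pose proof (cvg_pt_fst _ _ CL) as CL1; pose proof (cvg_pt_snd _ _ CL) as CL2; simpl in CL1, CL2.
  exists (fun k => s1 (s2 (s3 (s4 k)))), (comb3 (fst L) (snd L) c1 c2 c3).
  split; [apply strict_incr_comp; [|apply strict_incr_comp; [|apply strict_incr_comp]]; auto|].
  split.
  - exists (fst L), (snd L), c1, c2, c3. destruct HL as [? [? ?]]. repeat split; auto.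
  - apply (cvg_pt_ext (fun k => comb3 (l1 (s1 (s2 (s3 (s4 k))))) (l2 (s1 (s2 (s3 (s4 k)))))
            (q1 (s1 (s2 (s3 (s4 k))))) (q2 (s1 (s2 (s3 (s4 k))))) (q3 (s1 (s2 (s3 (s4 k))))))).
    { intros k; symmetry; apply H. }
    unfold comb3. repeat apply cvg_pt_padd; apply cvg_pt_pscale; auto.
    apply is_lim_seq_minus'; [apply is_lim_seq_minus'; auto using is_lim_seq_const|]; auto.
Qed.

Lemma nearest_point_vi (C : pt -> Prop) u c p :
  (forall z, C z -> sqnorm (psub u c) <= sqnorm (psub u z)) ->
  (forall t, 0 < t <= 1 -> C (lerp t c p)) ->
  dot (psub u c) (psub p c) <= 0.
Proof.
  intros Hmin Hseg. pose proof (sqnorm_ge0 (psub p c)) as Hd.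
  apply le_of_le_add_eps; intros e He.
  destruct (exists_small_step (sqnorm (psub p c)) e Hd He) as [t [Ht Hte]].
  specialize (Hmin _ (Hseg t Ht)).
  assert (E : sqnorm (psub u (lerp t c p)) = sqnorm (psub u c)
                - 2 * t * dot (psub u c) (psub p c) + t * t * sqnorm (psub p c)) by pt_ring.
  rewrite E in Hmin. apply (Rmult_le_reg_l t); [lra|]. nra.
Qed.

(* For the point [c] of the hull nearest to [u], no point of [P] goes beyond [c] in the
   direction [u - c]; the hypothesis then forces [u = c]. *)
Lemma conv3_of_support (P : pt -> Prop) u : seqcompact P -> (exists p, P p) ->
  (forall h, exists p, P p /\ dot u h <= dot p h) -> conv3 P u.
Proof.
  intros HP [p0 Hp0] Hsupp.
  destruct (exists_minimizer (conv3 P) (fun z => sqnorm (psub u z)) 0 (comb3 1 0 p0 p0 p0))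
    as [c [Hc Hmin]].
  - exists 1, 0, p0, p0, p0. repeat split; auto; lra.
  - intros; apply sqnorm_ge0.
  - apply seqcompact_conv3, HP.
  - intros v c' Hv. apply is_lim_seq_sqnorm, cvg_pt_psub; [apply cvg_pt_const | exact Hv].
  - destruct (Hsupp (psub u c)) as [p [Pp Hp]].
    assert (Hvi : dot (psub u c) (psub p c) <= 0)
      by (apply (nearest_point_vi (conv3 P)); auto; intros t Ht; apply conv3_lerp; auto; lra).
    replace u with c; [exact Hc|]. symmetry; apply sqnorm_le0_eq.
    unfold sqnorm, dot, psub in *; simpl in *. lra.
Qed.

(** * The Clarke subdifferential of the squared distance *)

(* Twice the Asplund function of [A], i.e. [z |-> sup_(a in A) (2 <z, a> - |a|^2)]. *)
Definition asplund (A : pt -> Prop) (z : pt) : R := sqnorm z - dist2_set A z.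

Definition nearest (A : pt -> Prop) (x p : pt) : Prop := A p /\ norm2 (psub p x) = dist_set A x.

Section Asplund.

Variables (A : pt -> Prop) (a0 : pt).
Hypothesis A_a0 : A a0.

Lemma asplund_ge a z : A a -> 2 * dot z a - sqnorm a <= asplund A z.
Proof.
  intros Ha. pose proof (dist2_set_le A a0 A_a0 z a Ha).
  unfold asplund; unfold sqnorm, dot, psub in *; simpl in *; nra.
Qed.

Lemma asplund_le_sqnorm z : asplund A z <= sqnorm z.
Proof. unfold asplund; pose proof (dist2_set_ge0 A a0 A_a0 z); lra. Qed.

Lemma asplund_convex : convex_fun (asplund A).
Proof.
  intros a b t Ht. unfold asplund at 1.
  enough (sqnorm (lerp t a b) - ((1 - t) * asplund A a + t * asplund A b)
          <= dist2_set A (lerp t a b)) by lra.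
  apply (dist2_set_ge A a0 A_a0); intros x Hx.
  pose proof (Rmult_le_compat_l (1 - t) _ _ ltac:(lra) (asplund_ge x a Hx)).
  pose proof (Rmult_le_compat_l t _ _ ltac:(lra) (asplund_ge x b Hx)).
  assert (E : sqnorm (psub x (lerp t a b)) = sqnorm (lerp t a b)
                - ((1 - t) * (2 * dot a x - sqnorm x) + t * (2 * dot b x - sqnorm x))) by pt_ring.
  rewrite E; lra.
Qed.

Lemma asplund_seq_continuous : seq_continuous (asplund A).
Proof.
  intros u c Hc. unfold asplund, dist2_set.
  apply is_lim_seq_minus'; [apply is_lim_seq_sqnorm, Hc|].
  apply is_lim_seq_sqr, (dist_set_seq_continuous A a0 A_a0), Hc.
Qed.

Lemma subgrad_asplund_of_has_grad z g :
  has_grad (dist2_set A) z g -> subgrad (asplund A) z (psub (pscale 2 z) g).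
Proof.
  intros Hg. apply subgrad_of_has_grad; [apply asplund_convex|].
  intros eps He. destruct (Hg (eps / 2) ltac:(lra)) as [delta [Hd Hh]].
  exists (Rmin delta (eps / 2)); split; [apply Rmin_glb_lt; lra|].
  intros h Hlt. pose proof (Rmin_l delta (eps / 2)); pose proof (Rmin_r delta (eps / 2)).
  specialize (Hh h ltac:(lra)). pose proof (norm2_ge0 h).
  assert (Hsq : sqnorm h <= eps / 2 * norm2 h) by (rewrite <- norm2_sqr; nra).
  assert (E : asplund A (padd z h) - asplund A z - dot (psub (pscale 2 z) g) h
              = sqnorm h - (dist2_set A (padd z h) - dist2_set A z - dot g h))
    by (unfold asplund; pt_ring).
  rewrite E. apply Rabs_le_between in Hh. pose proof (sqnorm_ge0 h). apply Rabs_le; lra.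
Qed.

(* Completing the square in [2 <z, a> - |a|^2 + |z - w|^2 / 2]. *)
Lemma prox_obj_asplund_ge a w z : A a ->
  2 * dot w a - 3 * sqnorm a + sqnorm (padd (psub z w) (pscale 2 a)) / 2
  <= prox_obj (asplund A) w z.
Proof.
  intros Ha. pose proof (asplund_ge a z Ha). unfold prox_obj.
  assert (E : sqnorm (padd (psub z w) (pscale 2 a))
              = sqnorm (psub z w) + 4 * (dot z a - dot w a) + 4 * sqnorm a) by pt_ring.
  lra.
Qed.

Lemma prox_obj_asplund_bound a w z K C : A a -> norm2 a <= K ->
  prox_obj (asplund A) w z <= C ->
  norm2 z <= norm2 w + 2 * K + 1 + 2 * (C + 2 * norm2 w * K + 3 * (K * K)).
Proof.
  intros Ha HK HC. pose proof (prox_obj_asplund_ge a w z Ha) as Hge.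
  set (e := padd (psub z w) (pscale 2 a)) in Hge.
  assert (Hz : z = padd (psub w (pscale 2 a)) e) by (unfold e; pt_eq).
  pose proof (norm2_ge0 a) as Ha0; pose proof (norm2_ge0 w) as Hw0.
  assert (Hwa : - dot w a <= norm2 w * K).
  { pose proof (Rabs_dot_le w a) as Hcs; apply Rabs_le_between in Hcs.
    pose proof (Rmult_le_compat_l _ _ _ Hw0 HK). lra. }
  assert (Ha2 : sqnorm a <= K * K)
    by (rewrite <- norm2_sqr; exact (Rmult_le_compat _ _ _ _ Ha0 Ha0 HK HK)).
  assert (He : norm2 e <= 1 + 2 * (C + 2 * norm2 w * K + 3 * (K * K))).
  { apply le_of_sqr_le; [apply norm2_ge0|]. rewrite norm2_sqr. lra. }
  rewrite Hz. eapply Rle_trans; [apply norm2_triangle|].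
  pose proof (norm2_triangle w (pscale (-2) a)) as Hw2a.
  replace (padd w (pscale (-2) a)) with (psub w (pscale 2 a)) in Hw2a by pt_eq.
  rewrite norm2_pscale, Rabs_left in Hw2a by lra. lra.
Qed.

Lemma exists_prox_min w : exists m, forall z, prox_obj (asplund A) w m <= prox_obj (asplund A) w z.
Proof.
  set (C := prox_obj (asplund A) w w).
  assert (Hcont := prox_obj_seq_continuous _ w asplund_seq_continuous).
  destruct (exists_minimizer (fun z => prox_obj (asplund A) w z <= C) (prox_obj (asplund A) w)
              (2 * dot w a0 - 3 * sqnorm a0) w) as [m [Hm Hmin]].
  - unfold C; lra.
  - intros z _. pose proof (prox_obj_asplund_ge a0 w z A_a0).
    pose proof (sqnorm_ge0 (padd (psub z w) (pscale 2 a0))). lra.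
  - set (K := norm2 a0).
    apply (seqcompact_of_closed_bounded _
             (norm2 w + 2 * K + 1 + 2 * (C + 2 * norm2 w * K + 3 * (K * K)))).
    + apply seqclosed_sublevel, Hcont.
    + intros z Hz. apply (prox_obj_asplund_bound a0); auto; unfold K; lra.
  - exact Hcont.
  - exists m; intros z. destruct (Rle_dec (prox_obj (asplund A) w z) C); [apply Hmin; auto|].
    specialize (Hmin w ltac:(unfold C; lra)). unfold C in *. lra.
Qed.

Lemma subgrad_of_clarke_subdiff x y :
  clarke_subdiff (dist2_set A) x y -> subgrad (asplund A) x (psub (pscale 2 x) y).
Proof.
  apply subgrad_conv_hull. intros g [xs [vs [Hgrad [Hx Hv]]]].
  apply (subgrad_closed _ xs (fun n => psub (pscale 2 (xs n)) (vs n)));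
    [apply asplund_seq_continuous | exact Hx | |].
  - apply cvg_pt_psub; [apply cvg_pt_pscale; [apply is_lim_seq_const | exact Hx] | exact Hv].
  - intros n; apply subgrad_asplund_of_has_grad, Hgrad.
Qed.

Hypothesis A_closed : seqclosed A.

Lemma exists_nearest x : exists p, nearest A x p.
Proof.
  set (r := norm2 (psub a0 x)).
  destruct (exists_minimizer (fun a => A a /\ norm2 (psub a x) <= r)
              (fun a => norm2 (psub a x)) 0 a0) as [c [[Ac Hcr] Hmin]].
  - split; [exact A_a0 | unfold r; lra].
  - intros; apply norm2_ge0.
  - apply (seqcompact_of_closed_bounded _ (norm2 x + r)).
    + intros u c Hu Hc. split; [exact (A_closed u c (fun n => proj1 (Hu n)) Hc)|].
      apply (lim_le (fun n => norm2 (psub (u n) x)) (fun _ => r)); auto using is_lim_seq_const.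
      * intros n; apply Hu.
      * apply is_lim_seq_norm2_psub, Hc.
    + intros a [_ Ha]. pose proof (norm2_le_psub a x); lra.
  - intros u c Hc. apply is_lim_seq_norm2_psub, Hc.
  - exists c; split; [exact Ac|]. apply Rle_antisym; [|apply (dist_set_le A a0 A_a0), Ac].
    apply (dist_set_ge A a0 A_a0); intros a Ha.
    destruct (Rle_dec (norm2 (psub a x)) r); [apply Hmin; auto | lra].
Qed.

Lemma seqcompact_nearest x : seqcompact (nearest A x).
Proof.
  apply (seqcompact_of_closed_bounded _ (norm2 x + dist_set A x)).
  - intros u c Hu Hc. assert (Ac : A c) by exact (A_closed u c (fun n => proj1 (Hu n)) Hc).
    split; [exact Ac|]. apply Rle_antisym; [|apply (dist_set_le A a0 A_a0), Ac].
    apply (lim_le (fun n => norm2 (psub (u n) x)) (fun _ => dist_set A x)).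
    + intros n; right; apply Hu.
    + apply is_lim_seq_norm2_psub, Hc.
    + apply is_lim_seq_const.
  - intros p [_ Hp]. pose proof (norm2_le_psub p x); lra.
Qed.

Lemma nearest_segment_margin x p t q : nearest A x p -> 0 <= t -> A q ->
  sqnorm (psub p (lerp t p x)) + (1 - t) * sqnorm (psub q p) <= sqnorm (psub q (lerp t p x)).
Proof.
  intros [Hp Hpx] Ht Hq. pose proof (dist_set_le A a0 A_a0 x q Hq) as Hd. rewrite <- Hpx in Hd.
  assert (sqnorm (psub p x) <= sqnorm (psub q x))
    by (rewrite <- !norm2_sqr; pose proof (norm2_ge0 (psub p x)); nra).
  assert (E : sqnorm (psub q (lerp t p x)) - sqnorm (psub p (lerp t p x))
              - (1 - t) * sqnorm (psub q p)
              = t * (sqnorm (psub q x) - sqnorm (psub p x))) by pt_ring.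
  nra.
Qed.

Lemma dist2_set_segment x p t : nearest A x p -> 0 <= t <= 1 ->
  dist2_set A (lerp t p x) = sqnorm (psub p (lerp t p x)).
Proof.
  intros Hp Ht. apply Rle_antisym; [apply (dist2_set_le A a0 A_a0), Hp|].
  apply (dist2_set_ge A a0 A_a0); intros q Hq.
  pose proof (nearest_segment_margin x p t q Hp ltac:(lra) Hq); pose proof (sqnorm_ge0 (psub q p)).
  nra.
Qed.

(* The margin squeezes [dist2_set A] between two quadratics tangent at [lerp t p x]. *)
Lemma has_grad_dist2_segment x p t : nearest A x p -> 0 <= t < 1 ->
  has_grad (dist2_set A) (lerp t p x) (pscale 2 (psub (lerp t p x) p)).
Proof.
  intros Hp Ht. set (z := lerp t p x). set (g := pscale 2 (psub z p)).
  pose proof (dist2_set_segment x p t Hp ltac:(lra)) as Hz. fold z in Hz.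
  intros eps He. exists (eps * (1 - t)); split; [nra|]. intros h Hh.
  pose proof (norm2_ge0 h) as Hh0; pose proof (sqnorm_ge0 h).
  assert (Hsmall : sqnorm h / (1 - t) <= eps * norm2 h).
  { rewrite <- norm2_sqr. unfold Rdiv. apply (Rmult_le_reg_r (1 - t)); [lra|].
    rewrite Rmult_assoc, Rinv_l by lra. nra. }
  assert (Hsq : sqnorm h <= sqnorm h / (1 - t)).
  { unfold Rdiv. assert (1 <= / (1 - t)) by (rewrite <- Rinv_1; apply Rinv_le_contravar; lra).
    nra. }
  assert (Hup : dist2_set A (padd z h) <= dist2_set A z + dot g h + sqnorm h).
  { rewrite Hz. replace (sqnorm (psub p z) + dot g h + sqnorm h) with (sqnorm (psub p (padd z h)))
      by (unfold g; pt_ring).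
    apply (dist2_set_le A a0 A_a0), Hp. }
  assert (Hlow : dist2_set A z + dot g h - sqnorm h / (1 - t) <= dist2_set A (padd z h)).
  { apply (dist2_set_ge A a0 A_a0); intros q Hq. rewrite Hz.
    pose proof (nearest_segment_margin x p t q Hp ltac:(lra) Hq) as Hgap. fold z in Hgap.
    pose proof (dot_le_norm2 (psub q p) h).
    pose proof (completed_square_ge (norm2 (psub q p)) (norm2 h) (1 - t) ltac:(lra)) as Hsq'.
    rewrite (norm2_sqr (psub q p)), (norm2_sqr h) in Hsq'.
    assert (E : sqnorm (psub q (padd z h))
                = sqnorm (psub q z) + dot g h - 2 * dot (psub q p) h + sqnorm h)
      by (unfold g; pt_ring).
    lra. }
  apply Rabs_le; lra.
Qed.

Lemma clarke_gen_nearest x p : nearest A x p -> clarke_gen (dist2_set A) x (pscale 2 (psub x p)).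
Proof.
  intros Hp. set (t := fun k : nat => 1 - / (INR k + 1)).
  assert (Ht : forall k, 0 <= t k < 1)
    by (intros k; unfold t; pose proof (inv_succ_pos k); pose proof (inv_succ_le1 k); lra).
  assert (Hlim : is_lim_seq t 1).
  { apply (is_lim_seq_squeeze _ (fun k => / (INR k + 1))); [intros k | exact is_lim_seq_inv_succ].
    unfold t. rewrite Rabs_left1; pose proof (inv_succ_pos k); lra. }
  assert (Hz : cvg_pt (fun k => lerp (t k) p x) (lerp 1 p x)).
  { unfold lerp. apply cvg_pt_padd; apply cvg_pt_pscale; auto using cvg_pt_const.
    apply is_lim_seq_minus'; auto using is_lim_seq_const. }
  replace (lerp 1 p x) with x in Hz by pt_eq.
  exists (fun k => lerp (t k) p x), (fun k => pscale 2 (psub (lerp (t k) p x) p)).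
  split; [intros n; apply has_grad_dist2_segment; auto | split; [exact Hz|]].
  apply cvg_pt_pscale; [apply is_lim_seq_const | apply cvg_pt_psub; auto using cvg_pt_const].
Qed.

(* Probing the subgradient inequality at [x + t h] with an almost nearest point [a] of
   [x + t h]; as [t -> 0] these points accumulate at nearest points of [x] (Danskin). *)
Lemma subgrad_asplund_probe x v h t : subgrad (asplund A) x v -> 0 < t ->
  exists a, A a /\ dot v h <= 2 * dot a h + t /\
            norm2 (psub a x) <= dist_set A x + t * (2 * norm2 h + 1).
Proof.
  intros Hv Ht. set (z := padd x (pscale t h)).
  destruct (dist2_set_approx A a0 A_a0 z (t * t)) as [a [Ha Haz]]; [nra|].
  exists a; split; [exact Ha | split].
  - specialize (Hv z). pose proof (asplund_ge a x Ha).
    assert (E1 : dot v (psub z x) = t * dot v h) by (unfold z; pt_ring).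
    assert (E2 : sqnorm (psub a z) = sqnorm z - 2 * dot z a + sqnorm a) by pt_ring.
    assert (E3 : dot z a = dot x a + t * dot a h) by (unfold z; pt_ring).
    unfold asplund at 2 in Hv. rewrite E1 in Hv. apply (Rmult_le_reg_l t); [lra|]. nra.
  - pose proof (dist_set_le_psub A a0 A_a0 z x) as Hdz.
    assert (Hzx : norm2 (psub z x) = t * norm2 h).
    { replace (psub z x) with (pscale t h) by (unfold z; pt_eq).
      rewrite norm2_pscale, Rabs_pos_eq; lra. }
    pose proof (dist_set_ge0 A a0 A_a0 x); pose proof (dist_set_ge0 A a0 A_a0 z).
    pose proof (norm2_ge0 h).
    assert (Hclose : norm2 (psub a z) <= dist_set A x + t * norm2 h + t).
    { apply norm2_le_of_sqnorm; [nra|]. rewrite dist2_set_sqr in Haz. nra. }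
    pose proof (norm2_psub_triangle a z x). lra.
Qed.

Lemma subgrad_asplund_support x v h : subgrad (asplund A) x v ->
  exists p, nearest A x p /\ dot v h <= 2 * dot p h.
Proof.
  intros Hv. set (t := fun k : nat => / (INR k + 1)).
  destruct (choice _ (fun k => subgrad_asplund_probe x v h (t k) Hv (inv_succ_pos k)))
    as [a Ha].
  destruct (bolzano_weierstrass_pt a (norm2 x + dist_set A x + (2 * norm2 h + 1)))
    as [s [p [Hs Hp]]].
  { intros k. destruct (Ha k) as [_ [_ Hk]]. pose proof (norm2_le_psub (a k) x).
    pose proof (inv_succ_pos k); pose proof (inv_succ_le1 k); unfold t in Hk.
    pose proof (norm2_ge0 h). nra. }
  assert (Hts : is_lim_seq (fun k => t (s k)) 0)
    by (apply is_lim_seq_subseq_incr, is_lim_seq_inv_succ; auto).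
  assert (Ap : A p) by (apply (A_closed (fun k => a (s k))); auto; intros; apply Ha).
  exists p; split; [split; [exact Ap|]|].
  - apply Rle_antisym; [|apply (dist_set_le A a0 A_a0), Ap].
    apply (lim_le (fun k => norm2 (psub (a (s k)) x))
                  (fun k => dist_set A x + t (s k) * (2 * norm2 h + 1))); [intros; apply Ha| |].
    + apply is_lim_seq_norm2_psub, Hp.
    + replace (dist_set A x) with (dist_set A x + 0 * (2 * norm2 h + 1)) at 1 by ring.
      apply is_lim_seq_plus'; [apply is_lim_seq_const|].
      apply is_lim_seq_mult'; [exact Hts | apply is_lim_seq_const].
  - apply (lim_le (fun _ => dot v h) (fun k => 2 * dot (a (s k)) h + t (s k)));
      [intros; apply Ha | apply is_lim_seq_const |].
    replace (2 * dot p h) with (2 * dot p h + 0) by ring.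
    apply is_lim_seq_plus'; [|exact Hts].
    apply is_lim_seq_mult'; [apply is_lim_seq_const|].
    apply is_lim_seq_dot; auto using cvg_pt_const.
Qed.

Lemma clarke_subdiff_of_subgrad x y :
  subgrad (asplund A) x (psub (pscale 2 x) y) -> clarke_subdiff (dist2_set A) x y.
Proof.
  intros Hv. set (v := psub (pscale 2 x) y) in Hv.
  assert (Hconv : conv3 (nearest A x) (pscale (/ 2) v)).
  { apply conv3_of_support; [apply seqcompact_nearest | apply exists_nearest|].
    intros h. destruct (subgrad_asplund_support x v h Hv) as [p [Hp Hvh]].
    exists p; split; [exact Hp|]. replace (dot (pscale (/ 2) v) h) with (dot v h / 2)
      by (unfold dot, pscale; simpl; field).
    lra. }
  destruct Hconv as [l1 [l2 [p1 [p2 [p3 [H1 [H2 [H3 [P1 [P2 [P3 E]]]]]]]]]]].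
  assert (Ex := f_equal fst E); assert (Ey := f_equal snd E).
  unfold v, comb3, pscale, padd, psub in Ex, Ey; simpl in Ex, Ey.
  exists 2%nat, (fun i => match i with O => l1 | 1%nat => l2 | _ => 1 - l1 - l2 end),
    (fun i => pscale 2 (psub x (match i with O => p1 | 1%nat => p2 | _ => p3 end))).
  split; [|split].
  - intros i Hi. assert (Hi3 : (i = 0 \/ i = 1 \/ i = 2)%nat) by lia.
    destruct Hi3 as [-> | [-> | ->]]; (split; [lra | apply clarke_gen_nearest; auto]).
  - simpl; ring.
  - unfold pscale, psub; simpl. apply injective_projections; simpl; lra.
Qed.

Theorem clarke_subdiff_dist2_iff x y :
  clarke_subdiff (dist2_set A) x y <-> subgrad (asplund A) x (psub (pscale 2 x) y).
Proof. split; [apply subgrad_of_clarke_subdiff | apply clarke_subdiff_of_subgrad]. Qed.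

End Asplund.

(** * Painleve-Kuratowski limits *)

Lemma PK_conv_of_inclusions {M : Type} (cv : (nat -> M) -> M -> Prop) A B :
  (forall x, limsup_set cv A x -> B x) -> (forall x, B x -> liminf_set cv A x) -> PK_conv cv A B.
Proof.
  intros Hsup Hinf.
  assert (Hsub : forall x, liminf_set cv A x -> limsup_set cv A x)
    by (intros x [u [Hu Hc]]; exists (fun k => k), u; split; [intro; lia | auto]).
  split; intros x; split; auto.
Qed.

Section PainleveKuratowski.

Variables (Xs : nat -> pt -> Prop) (X : pt -> Prop) (x0 : pt).
Hypothesis X_x0 : X x0.
Hypothesis Xs_liminf : forall x, liminf_set cvg_pt Xs x <-> X x.
Hypothesis Xs_limsup : forall x, limsup_set cvg_pt Xs x <-> X x.

Lemma pk_nonempty n : exists a, Xs n a.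
Proof. destruct (proj2 (Xs_liminf x0) X_x0) as [u [Hu _]]. exists (u n); auto. Qed.

Lemma pk_dist_upper z eps : 0 < eps ->
  exists N, forall n, (N <= n)%nat -> dist_set (Xs n) z < dist_set X z + eps.
Proof.
  intros He. destruct (dist_set_approx X x0 X_x0 z (eps / 2)) as [a [Ha Haz]]; [lra|].
  destruct (proj2 (Xs_liminf a) Ha) as [b [Hb Hba]].
  destruct (Hba (eps / 2) ltac:(lra)) as [N HN]. exists N; intros n Hn.
  pose proof (dist_set_le (Xs n) (b n) (Hb n) z (b n) (Hb n)).
  pose proof (norm2_psub_triangle (b n) a z). specialize (HN n Hn). lra.
Qed.

Lemma pk_dist_lower z eps : 0 < eps ->
  exists N, forall n, (N <= n)%nat -> dist_set X z - eps < dist_set (Xs n) z.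
Proof.
  intros He. apply NNPP; intros Hn.
  destruct (not_eventually_subseq _ Hn) as [s [Hs Hfar]].
  assert (Hb : forall k, exists b,
             Xs (s k) b /\ norm2 (psub b z) < dist_set (Xs (s k)) z + eps / 2).
  { intros k. destruct (pk_nonempty (s k)) as [a Ha].
    apply (dist_set_approx _ a Ha); lra. }
  destruct (choice _ Hb) as [b Hbk].
  assert (Hbz : forall k, norm2 (psub (b k) z) <= dist_set X z - eps / 2)
    by (intros k; specialize (Hfar k); destruct (Hbk k); lra).
  destruct (bolzano_weierstrass_pt b (norm2 z + dist_set X z)) as [r [c [Hr Hc]]].
  { intros k. pose proof (norm2_le_psub (b k) z); specialize (Hbz k); lra. }
  assert (Xc : X c).
  { apply Xs_limsup. exists (fun k => s (r k)), (fun k => b (r k)).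
    split; [apply strict_incr_comp; auto | split; [intros; apply Hbk | exact Hc]]. }
  pose proof (dist_set_le X x0 X_x0 z c Xc).
  assert (norm2 (psub c z) <= dist_set X z - eps / 2).
  { apply (lim_le (fun k => norm2 (psub (b (r k)) z)) (fun _ => dist_set X z - eps / 2));
      auto using is_lim_seq_const, is_lim_seq_norm2_psub. }
  lra.
Qed.

Lemma pk_dist z : is_lim_seq (fun n => dist_set (Xs n) z) (dist_set X z).
Proof.
  apply is_lim_seq_spec; intros eps.
  destruct (pk_dist_upper z eps (cond_pos eps)) as [N1 HN1].
  destruct (pk_dist_lower z eps (cond_pos eps)) as [N2 HN2].
  exists (N1 + N2)%nat; intros n Hn.
  specialize (HN1 n ltac:(lia)); specialize (HN2 n ltac:(lia)). apply Rabs_lt_between'; lra.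
Qed.

Lemma pk_dist_subseq s (zs : nat -> pt) z : strict_incr s -> cvg_pt zs z ->
  is_lim_seq (fun k => dist_set (Xs (s k)) (zs k)) (dist_set X z).
Proof.
  intros Hs Hz. apply cvg_pt_iff in Hz.
  pose proof (is_lim_seq_subseq_incr _ _ s Hs (pk_dist z)) as Hd.
  apply (is_lim_seq_le_le (fun k => dist_set (Xs (s k)) z - norm2 (psub (zs k) z)) _
                          (fun k => dist_set (Xs (s k)) z + norm2 (psub (zs k) z))).
  - intros k. destruct (pk_nonempty (s k)) as [a Ha].
    pose proof (dist_set_lipschitz (Xs (s k)) a Ha (zs k) z) as Hl.
    apply Rabs_le_between in Hl; lra.
  - replace (dist_set X z) with (dist_set X z - 0) by ring. apply is_lim_seq_minus'; auto.
  - replace (dist_set X z) with (dist_set X z + 0) by ring. apply is_lim_seq_plus'; auto.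
Qed.

Lemma pk_asplund_subseq s (zs : nat -> pt) z : strict_incr s -> cvg_pt zs z ->
  is_lim_seq (fun k => asplund (Xs (s k)) (zs k)) (asplund X z).
Proof.
  intros Hs Hz. unfold asplund, dist2_set.
  apply is_lim_seq_minus'; [apply is_lim_seq_sqnorm, Hz|].
  apply is_lim_seq_sqr, pk_dist_subseq; auto.
Qed.

Lemma pk_closed : seqclosed X.
Proof.
  intros u c Hu Hc. apply Xs_liminf.
  assert (Hd0 : dist_set X c = 0).
  { apply Rle_antisym; [|apply (dist_set_ge0 X x0 X_x0)].
    apply (lim_le (fun n => dist_set X c) (fun n => norm2 (psub (u n) c)));
      [intros n; apply (dist_set_le X x0 X_x0), Hu | apply is_lim_seq_const |
       apply cvg_pt_iff, Hc]. }
  assert (Hb : forall n, exists b,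
             Xs n b /\ norm2 (psub b c) < dist_set (Xs n) c + / (INR n + 1)).
  { intros n. destruct (pk_nonempty n) as [a Ha]. apply (dist_set_approx _ a Ha), inv_succ_pos. }
  destruct (choice _ Hb) as [b Hbn]. exists b; split; [intros; apply Hbn|].
  apply cvg_pt_iff.
  apply (is_lim_seq_le_le (fun _ => 0) _ (fun n => dist_set (Xs n) c + / (INR n + 1))).
  - intros n; split; [apply norm2_ge0 | left; apply Hbn].
  - apply is_lim_seq_const.
  - replace 0 with (dist_set X c + 0) by (rewrite Hd0; ring).
    apply is_lim_seq_plus'; [apply pk_dist | apply is_lim_seq_inv_succ].
Qed.

Lemma pk_subgrad_limit s (xs vs : nat -> pt) x v : strict_incr s -> cvg_pt xs x -> cvg_pt vs v ->
  (forall k, subgrad (asplund (Xs (s k))) (xs k) (vs k)) -> subgrad (asplund X) x v.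
Proof.
  intros Hs Hx Hv H z.
  apply (lim_le (fun k => asplund (Xs (s k)) (xs k) + dot (vs k) (psub z (xs k)))
                (fun k => asplund (Xs (s k)) z)); [intros; apply H| |].
  - apply is_lim_seq_plus'; [apply pk_asplund_subseq; auto|].
    apply is_lim_seq_dot; [exact Hv | apply cvg_pt_psub; auto using cvg_pt_const].
  - apply (pk_asplund_subseq s (fun _ => z)); auto using cvg_pt_const.
Qed.

Lemma pk_prox_obj_subseq w s (zs : nat -> pt) z : strict_incr s -> cvg_pt zs z ->
  is_lim_seq (fun k => prox_obj (asplund (Xs (s k))) w (zs k)) (prox_obj (asplund X) w z).
Proof.
  intros Hs Hz. unfold prox_obj. apply is_lim_seq_plus'; [apply pk_asplund_subseq; auto|].
  apply is_lim_seq_div'; [|apply is_lim_seq_const | lra].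
  apply is_lim_seq_sqnorm, cvg_pt_psub; auto using cvg_pt_const.
Qed.

(* The proximal points of [asplund (Xs n)] at [w] converge to that of [asplund X]: both
   proximal objectives grow quadratically away from their minimizers. *)
Lemma pk_prox_cvg w x (xs : nat -> pt) :
  subgrad (asplund X) x (psub w x) ->
  (forall n, subgrad (asplund (Xs n)) (xs n) (psub w (xs n))) -> cvg_pt xs x.
Proof.
  intros Hx Hxs.
  destruct (proj2 (Xs_liminf x0) X_x0) as [b [Hb Hbx]].
  destruct (cvg_pt_eventually_bounded b x0 Hbx) as [N HN].
  set (K := norm2 x0 + 1). set (C := sqnorm x + sqnorm (psub x w) / 2).
  apply (cvg_pt_of_unique_cluster xs x N
           (norm2 w + 2 * K + 1 + 2 * (C + 2 * norm2 w * K + 3 * (K * K)))).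
  - intros n Hn. apply (prox_obj_asplund_bound (Xs n) (b n) (Hb n) (b n)); auto.
    pose proof (prox_obj_growth _ w (xs n) x (Hxs n)).
    pose proof (asplund_le_sqnorm (Xs n) (b n) (Hb n) x).
    pose proof (sqnorm_ge0 (psub x (xs n))). unfold prox_obj, C in *. lra.
  - intros s c Hs Hc. symmetry. apply sqnorm_le0_eq.
    assert (Hgrow : prox_obj (asplund X) w c + sqnorm (psub x c) / 2 <= prox_obj (asplund X) w x).
    { apply (lim_le (fun k => prox_obj (asplund (Xs (s k))) w (xs (s k))
                              + sqnorm (psub x (xs (s k))) / 2)
                    (fun k => prox_obj (asplund (Xs (s k))) w x)).
      - intros k; apply prox_obj_growth, Hxs.
      - apply is_lim_seq_plus'; [apply pk_prox_obj_subseq; auto|].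
        apply is_lim_seq_div'; [|apply is_lim_seq_const | lra].
        apply is_lim_seq_sqnorm, cvg_pt_psub; auto using cvg_pt_const.
      - apply (pk_prox_obj_subseq w s (fun _ => x)); auto using cvg_pt_const. }
    pose proof (prox_obj_growth _ w x c Hx) as Hgrow'.
    replace (sqnorm (psub c x)) with (sqnorm (psub x c)) in Hgrow' by pt_ring. lra.
Qed.

Hypothesis Xs_closed : forall n, seqclosed (Xs n).

Lemma pk_clarke_subdiff_iff n x y :
  clarke_subdiff (dist2_set (Xs n)) x y <-> subgrad (asplund (Xs n)) x (psub (pscale 2 x) y).
Proof. destruct (pk_nonempty n) as [a Ha]. apply (clarke_subdiff_dist2_iff _ a); auto. Qed.

Lemma pk_graph_limsup w :
  limsup_set cvg_pp (fun n => graph (clarke_subdiff (dist2_set (Xs n)))) w ->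
  graph (clarke_subdiff (dist2_set X)) w.
Proof.
  destruct w as [x y]. intros [s [u [Hs [Hu [Hx Hy]]]]]. unfold graph in *; simpl in *.
  apply (clarke_subdiff_dist2_iff X x0 X_x0 pk_closed).
  apply (pk_subgrad_limit s (fun k => fst (u k))
           (fun k => psub (pscale 2 (fst (u k))) (snd (u k)))); auto.
  - apply cvg_pt_psub; [apply cvg_pt_pscale; auto using is_lim_seq_const | exact Hy].
  - intros k; apply pk_clarke_subdiff_iff, Hu.
Qed.

(* Approximate [(x, y)] by the proximal points of [asplund (Xs n)] at [w = x + (2x - y)]. *)
Lemma pk_graph_liminf w :
  graph (clarke_subdiff (dist2_set X)) w ->
  liminf_set cvg_pp (fun n => graph (clarke_subdiff (dist2_set (Xs n)))) w.
Proof.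
  destruct w as [x y]. unfold graph; simpl. intros Hxy.
  apply (subgrad_of_clarke_subdiff X x0 X_x0) in Hxy.
  set (w := padd x (psub (pscale 2 x) y)).
  assert (Hprox : forall n, exists m, forall z,
             prox_obj (asplund (Xs n)) w m <= prox_obj (asplund (Xs n)) w z).
  { intros n. destruct (pk_nonempty n) as [a Ha]. apply (exists_prox_min _ a Ha). }
  destruct (choice _ Hprox) as [xs Hxs].
  assert (Hsub : forall n, subgrad (asplund (Xs n)) (xs n) (psub w (xs n))).
  { intros n. destruct (pk_nonempty n) as [a Ha].
    apply subgrad_of_prox_min; [apply (asplund_convex _ a Ha) | apply Hxs]. }
  assert (Hcvg : cvg_pt xs x).
  { apply (pk_prox_cvg w); [|exact Hsub].
    replace (psub w x) with (psub (pscale 2 x) y) by (unfold w; pt_eq). exact Hxy. }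
  exists (fun n => (xs n, psub (pscale 3 (xs n)) w)). split.
  - intros n. unfold graph; simpl. apply pk_clarke_subdiff_iff.
    replace (psub (pscale 2 (xs n)) (psub (pscale 3 (xs n)) w)) with (psub w (xs n)) by pt_eq.
    apply Hsub.
  - split; simpl; [exact Hcvg|].
    assert (Hy : cvg_pt (fun n => psub (pscale 3 (xs n)) w) (psub (pscale 3 x) w))
      by (apply cvg_pt_psub; [apply cvg_pt_pscale|]; auto using is_lim_seq_const, cvg_pt_const).
    replace (psub (pscale 3 x) w) with y in Hy by (unfold w; pt_eq). exact Hy.
Qed.

End PainleveKuratowski.

Theorem mainTheorem5 (Xs : nat -> pt -> Prop) (X : pt -> Prop) :
  (forall n, closed_pt (Xs n)) ->
  (exists x, X x) ->
  PK_conv cvg_pt Xs X ->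
  PK_conv cvg_pp
    (fun n => graph (clarke_subdiff (dist2_set (Xs n))))
    (graph (clarke_subdiff (dist2_set X))).
Proof.
  intros Hclosed [x0 Hx0] [Hinf Hsup].
  pose proof (fun n => seqclosed_of_closed _ (Hclosed n)) as Xs_closed.
  apply PK_conv_of_inclusions.
  - exact (pk_graph_limsup Xs X x0 Hx0 Hinf Hsup Xs_closed).
  - exact (pk_graph_liminf Xs X x0 Hx0 Hinf Hsup Xs_closed).
Qed.
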